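(* Let $n,m$ be positive integers and $d=nm$. Let $\boldsymbol\alpha,\boldsymbol\beta\in\mathbb{R}^m_{\geq 0}$ be such that $\mathbf a=(\boldsymbol\alpha^\top,\dots,\boldsymbol\alpha^\top)^\top\in\mathbb{R}^d$ and $\mathbf b=(\boldsymbol\beta^\top,\dots,\boldsymbol\beta^\top)^\top\in\mathbb{R}^d$ ($n$ stacked copies each) are probability vectors. Let $\mathbf C_0,\dots,\mathbf C_{n-1}\in\mathbb{R}^{m\times m}_{\geq 0}$ and let $\mathbf C\in\mathbb{R}^{d\times d}$ be the block-circulant matrix whose $(r,s)$-th $m\times m$ block ($0\le r,s\le n-1$) is $\mathbf C_{(s-r)\bmod n}$. Let $\phi:\mathbb{R}\to\mathbb{R}\cup\{+\infty\}$ be convex with $\phi(x)=+\infty$ for $x<0$. Consider the problem $$\min_{\mathbf T\in\mathbb{R}^{d\times d}} \langle \mathbf C,\mathbf T\rangle+\sum_{i,j=0}^{d-1}\phi(T_{ij})\quad\text{s.t.}\quad \mathbf T\mathbf 1_d=\mathbf a,\ \ \mathbf T^\top\mathbf 1_d=\mathbf b,$$ and suppose it has an optimal solution. Then there exists an optimal solution $\mathbf T$ of this problem that is block-circulant, i.e. there are $\mathbf T_0,\dots,\mathbf T_{n-1}\in\mathbb{R}^{m\times m}_{\geq 0}$ such that the $(r,s)$-th $m\times m$ block of $\mathbf T$ is $\mathbf T_{(s-r)\bmod n}$ for all $0\le r,s\le n-1$.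
   Context: $\langle\mathbf X,\mathbf Y\rangle=\sum_{i,j}X_{ij}Y_{ij}$ is the Frobenius inner product, and $\mathbf 1_d$ is the all-ones vector in $\mathbb{R}^d$. Block-circulant means the first block row is $(\mathbf C_0,\mathbf C_1,\dots,\mathbf C_{n-1})$ and each subsequent block row is the cyclic shift of the previous one by one block to the right. *)

From mathcomp Require Import all_boot all_order all_algebra.
From mathcomp Require Import all_classical all_reals ereal.
Set Implicit Arguments. Unset Strict Implicit. Unset Printing Implicit Defensive.
Import Order.TTheory GRing.Theory Num.Theory.
Local Open Scope ring_scope.

(* Indices of R^d with d = n*m are 'I_(n * m); index k lies in block k %/ m
   at position k %% m inside the block. *)

Definition block_circulant (R : Type) (n m : nat)
  (M : 'M[R]_(n * m)) (B : nat -> 'M[R]_m) : Prop :=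
  forall (i j : 'I_(n * m)) (hi : (i %% m < m)%N) (hj : (j %% m < m)%N),
    M i j = B ((j %/ m + n - i %/ m) %% n)%N (Ordinal hi) (Ordinal hj).

Definition stacked (R : Type) (n m : nat) (v : 'I_m -> R) (w : 'I_(n * m) -> R) : Prop :=
  forall (k : 'I_(n * m)) (hk : (k %% m < m)%N), w k = v (Ordinal hk).

Definition is_prob_vec (R : numDomainType) (d : nat) (w : 'I_d -> R) : Prop :=
  (forall k, 0 <= w k) /\ \sum_(k < d) w k = 1.

(* Convex function R -> R ∪ {+oo} (values in \bar R, never -oo);
   convexity uses the standard convention 0 * (+oo) = 0. *)
Definition convex_ext (R : realType) (phi : R -> \bar R) : Prop :=
  (forall x, phi x != -oo%E) /\
  forall (x y t : R), (0 <= t <= 1)%R ->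
    (phi (t * x + (1 - t) * y)%R <= t%:E * phi x + (1 - t)%:E * phi y)%E.

Definition ot_obj (R : realType) (d : nat) (phi : R -> \bar R)
  (C T : 'M[R]_d) : \bar R :=
  ((\sum_(i < d) \sum_(j < d) C i j * T i j)%:E
   + \sum_(i < d) \sum_(j < d) phi (T i j))%E.

Definition feasible (R : realType) (d : nat) (a b : 'I_d -> R) (T : 'M[R]_d) : Prop :=
  (forall i, \sum_(j < d) T i j = a i) /\ (forall j, \sum_(i < d) T i j = b j).

Definition optimal (R : realType) (d : nat) (phi : R -> \bar R)
  (C : 'M[R]_d) (a b : 'I_d -> R) (T : 'M[R]_d) : Prop :=
  feasible a b T /\
  forall T', feasible a b T' -> (ot_obj phi C T <= ot_obj phi C T')%E.

From mathcomp Require Import all_boot all_order all_algebra.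
From mathcomp Require Import all_classical all_reals ereal.
From mathcomp Require Import zify ring.
Set Implicit Arguments. Unset Strict Implicit. Unset Printing Implicit Defensive.
Import Order.TTheory GRing.Theory Num.Theory.

(* The cyclic block shifts form a group of index permutations that fixes
   a, b and C.  Averaging an optimal plan over this group keeps it
   feasible, leaves the linear cost unchanged and, by Jensen's inequality,
   does not increase the convex part; the average is shift invariant, i.e.
   block-circulant.  If the optimal value is +oo every feasible plan is
   optimal and the independent coupling a b^T already is block-circulant. *)

Section BlockShift.
Variables (n m : nat) (n_gt0 : (0 < n)%N) (m_gt0 : (0 < m)%N).

Lemma blk_index_lt q r : (q %% n * m + r %% m < n * m)%N.
Proof.
have := ltn_pmod q n_gt0; have := ltn_pmod r m_gt0.
move: (q %% n) (r %% m) => x y; nia.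
Qed.

Definition blk_index q r : 'I_(n * m) := Ordinal (blk_index_lt q r).

Lemma blk_index_div q r : (blk_index q r %/ m = q %% n)%N.
Proof. by rewrite /= divnMDl // divn_small ?addn0 // ltn_pmod. Qed.

Lemma blk_index_mod q r : (blk_index q r %% m = r %% m)%N.
Proof. by rewrite /= modnMDl modn_mod. Qed.

Lemma blk_lt (i : 'I_(n * m)) : (i %/ m < n)%N.
Proof. by rewrite ltn_divLR. Qed.

Definition bshift k (i : 'I_(n * m)) := blk_index (i %/ m + k) i.

Lemma bshift_div k i : (bshift k i %/ m = (i %/ m + k) %% n)%N.
Proof. exact: blk_index_div. Qed.

Lemma bshift_mod k i : (bshift k i %% m = i %% m)%N.
Proof. exact: blk_index_mod. Qed.

Lemma bshift_inj k : injective (bshift k).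
Proof.
move=> i j eij.
have /eqP : (i %/ m == j %/ m %[mod n])%N.
  by rewrite -(eqn_modDr k) -!bshift_div eij.
rewrite !modn_small ?blk_lt // => div_ij.
apply: val_inj; rewrite /= (divn_eq i m) (divn_eq j m) div_ij.
by rewrite -(bshift_mod k i) -(bshift_mod k j) eij.
Qed.

Lemma bshift_modn k i : bshift (k %% n) i = bshift k i.
Proof. by apply: val_inj; rewrite /= modnDmr. Qed.

Lemma bshift_add k l i : bshift k (bshift l i) = bshift (l + k) i.
Proof. by apply: val_inj; rewrite /= bshift_div bshift_mod modnDml addnA. Qed.

Lemma modn_block_diff u v k : (u < n)%N ->
  (((v + k) %% n + n - (u + k) %% n) %% n = (v + n - u) %% n)%N.
Proof.
have subnK_mod x y : (y < n)%N -> ((x + n - y) %% n + y = x %[mod n])%N.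
  by move=> lt_yn; rewrite modnDml subnK ?modnDr // ltnW ?ltn_addl.
move=> lt_un; apply/eqP; rewrite -(modn_small (ltn_pmod _ n_gt0)).
rewrite -[X in _ == X](modn_small (ltn_pmod _ n_gt0)).
rewrite -(eqn_modDr ((u + k) %% n)) (subnK_mod ((v + k) %% n)) ?ltn_pmod //.
by rewrite modnDmr addnA -[in X in _ == X]modnDml subnK_mod // modnDml modn_mod.
Qed.

Lemma block_circulant_bshift (V : Type) (M : 'M[V]_(n * m)) B :
  block_circulant M B -> forall k i j, M (bshift k i) (bshift k j) = M i j.
Proof.
move=> circM k i j; have hm x : (x %% m < m)%N by rewrite ltn_pmod.
rewrite (circM _ _ (hm _) (hm _)) (circM i j (hm _) (hm _)).
rewrite !bshift_div modn_block_diff ?blk_lt //.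
by congr (B _ _ _); apply: val_inj; rewrite /= bshift_mod.
Qed.

Lemma bshift_invariant_block_circulant (V : Type) (M : 'M[V]_(n * m)) :
  (forall k i j, M (bshift k i) (bshift k j) = M i j) ->
  block_circulant M
    (fun q => (\matrix_(r, c) M (blk_index 0 r) (blk_index q c))%R).
Proof.
move=> invM i j hi hj; rewrite mxE -(invM (n - i %/ m) i j).
have le_in : (i %/ m <= n)%N := ltnW (blk_lt i).
congr (M _ _); apply: val_inj; rewrite /= ?modn_mod.
  by rewrite subnKC // modnn mod0n.
by rewrite addnBA.
Qed.

Lemma stacked_bshift (V : Type) (v : 'I_m -> V) w :
  stacked v w -> forall k i, w (bshift k i) = w i.
Proof.
move=> stk k i; have hm x : (x %% m < m)%N by rewrite ltn_pmod.
rewrite (stk _ (hm _)) (stk i (hm _)).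
by congr v; apply: val_inj; rewrite /= bshift_mod.
Qed.

Lemma big_bshift (V : Type) (idx : V) (op : Monoid.com_law idx) k F :
  \big[op/idx]_i F (bshift k i) = \big[op/idx]_i F i.
Proof. by rewrite [RHS](reindex_inj (@bshift_inj k)). Qed.

Lemma big_bshift2 (V : Type) (idx : V) (op : Monoid.com_law idx) k F :
  \big[op/idx]_i \big[op/idx]_j F (bshift k i) (bshift k j)
    = \big[op/idx]_i \big[op/idx]_j F i j.
Proof.
rewrite -[RHS](big_bshift _ k); apply: eq_bigr => i _.
exact: (big_bshift _ k (F (bshift k i))).
Qed.

Lemma big_ord_addn_periodic (V : Type) (idx : V) (op : Monoid.com_law idx)
    (G : nat -> V) l :
  (forall k, G (k %% n) = G k) ->
  \big[op/idx]_(k < n) G (l + k) = \big[op/idx]_(k < n) G k.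
Proof.
move=> perG; pose f (k : 'I_n) : 'I_n := Ordinal (ltn_pmod (l + k) n_gt0).
have f_inj : injective f.
  move=> k k' /(congr1 val) /= eq_lk.
  have /eqP : (k == k' %[mod n]) by rewrite -(eqn_modDl l) eq_lk.
  by rewrite !modn_small // => /val_inj.
by rewrite [RHS](reindex_inj f_inj); apply: eq_bigr => k _; rewrite /= perG.
Qed.

End BlockShift.

Local Open Scope ring_scope.

Lemma convex_ext_jensen (R : realType) (phi : R -> \bar R) (x y : nat -> R) p :
    convex_ext phi -> (forall k, phi (x k) = (y k)%:E) -> (0 < p)%N ->
  (phi ((\sum_(k < p) x k) / p%:R)%R <= ((\sum_(k < p) y k) / p%:R)%R%:E)%E.
Proof.
move=> [_ cvx] phixy; elim: p => [//|p IHp] _.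
have [->|p_gt0] := posnP p; first by rewrite !big_ord1 !divr1 phixy.
have p_neq0 : (p%:R : R) != 0 by rewrite pnatr_eq0 -lt0n.
pose t : R := p%:R / p.+1%:R.
have t01 : 0 <= t <= 1.
  by rewrite /t divr_ge0 //= ler_pdivrMr ?ltr0n // mul1r ler_nat.
have mean_recr (z : nat -> R) : (\sum_(k < p.+1) z k) / p.+1%:R
    = t * ((\sum_(k < p) z k) / p%:R) + (1 - t) * z p.
  by rewrite big_ord_recr /= /t; field; rewrite p_neq0 andbT addrC natr1.
rewrite !mean_recr; apply: le_trans (cvx _ _ _ t01) _.
rewrite phixy [leRHS]EFinD (EFinM t) (EFinM (1 - t)).
apply: leeD2r; apply: lee_wpmul2l; last exact: IHp.
by rewrite lee_fin; case/andP: t01.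
Qed.

Lemma ot_obj_entry_finite (R : realType) d (phi : R -> \bar R) (C T : 'M[R]_d) :
    (forall x, phi x != -oo%E) -> ot_obj phi C T != +oo%E ->
  forall i j, phi (T i j) != +oo%E.
Proof.
move=> phi_nNy objT_fin i j; apply: contra objT_fin => /eqP phiT_y.
have sum_nNy i' : (\sum_j' phi (T i' j') != -oo)%E.
  by rewrite esum_eqNy; apply/existsPn => j'; rewrite phi_nNy.
rewrite /ot_obj (eqP (_ : \sum_i \sum_j phi (T i j) == +oo)%E) ?addey //.
rewrite esum_eqy //; apply/existsP; exists i.
by rewrite esum_eqy //; apply/existsP; exists j; rewrite phiT_y.
Qed.

Section Averaging.
Variables (R : realType) (n m : nat) (n_gt0 : (0 < n)%N) (m_gt0 : (0 < m)%N).
Local Notation bshift := (bshift n_gt0 m_gt0).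

Definition bavg (T : 'M[R]_(n * m)) : 'M[R]_(n * m) :=
  \matrix_(i, j) ((\sum_(k < n) T (bshift k i) (bshift k j)) / n%:R).

Lemma mean_const (c : R) : (\sum_(k < n) c) / n%:R = c.
Proof.
have n_neq0 : (n%:R : R) != 0 by rewrite pnatr_eq0 -lt0n.
by rewrite sumr_const card_ord -[c *+ n]mulr_natr mulfK.
Qed.

Lemma sum_mean_bshift (F : 'I_(n * m) -> 'I_(n * m) -> R) :
  \sum_i \sum_j (\sum_(k < n) F (bshift k i) (bshift k j)) / n%:R
    = \sum_i \sum_j F i j.
Proof.
under eq_bigr do rewrite -mulr_suml exchange_big.
rewrite -mulr_suml exchange_big -[RHS]mean_const; congr (_ / _).
by apply: eq_bigr => k _; rewrite big_bshift2.
Qed.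

Lemma bavg_bshift (T : 'M[R]_(n * m)) l i j :
  bavg T (bshift l i) (bshift l j) = bavg T i j.
Proof.
rewrite !mxE; congr (_ / _).
under eq_bigr do rewrite !bshift_add.
rewrite (@big_ord_addn_periodic _ n_gt0 _ _ _
           (fun k => T (bshift k i) (bshift k j))) //.
by move=> k; rewrite !bshift_modn.
Qed.

Lemma bavg_ge0 (T : 'M[R]_(n * m)) :
  (forall i j, 0 <= T i j) -> forall i j, 0 <= bavg T i j.
Proof. by move=> T_ge0 i j; rewrite mxE divr_ge0 ?ler0n ?sumr_ge0. Qed.

Lemma feasible_bavg (a b : 'I_(n * m) -> R) (T : 'M[R]_(n * m)) :
    (forall k i, a (bshift k i) = a i) -> (forall k j, b (bshift k j) = b j) ->
  feasible a b T -> feasible a b (bavg T).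
Proof.
move=> a_inv b_inv [rowT colT]; split=> i; under eq_bigr do rewrite mxE;
  rewrite -mulr_suml exchange_big -[RHS]mean_const; congr (_ / _);
  apply: eq_bigr => k _.
  by rewrite (big_bshift n_gt0 m_gt0 _ k (T (bshift k i))) rowT a_inv.
by rewrite (big_bshift n_gt0 m_gt0 _ k (T^~ (bshift k i))) colT b_inv.
Qed.

Lemma lin_cost_bavg (C T : 'M[R]_(n * m)) :
    (forall k i j, C (bshift k i) (bshift k j) = C i j) ->
  \sum_i \sum_j C i j * bavg T i j = \sum_i \sum_j C i j * T i j.
Proof.
move=> C_inv; rewrite -[RHS]sum_mean_bshift; apply: eq_bigr => i _.
apply: eq_bigr => j _; rewrite mxE mulrA mulr_sumr.
by under eq_bigr => k _ do rewrite -(C_inv k).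
Qed.

Lemma convex_cost_bavg (phi : R -> \bar R) (T : 'M[R]_(n * m)) :
    convex_ext phi -> (forall i j, phi (T i j) != +oo%E) ->
  (\sum_i \sum_j phi (bavg T i j) <= \sum_i \sum_j phi (T i j))%E.
Proof.
move=> cvx phiT_fin; pose y i j := fine (phi (T i j)).
have phiT i j : phi (T i j) = (y i j)%:E.
  by rewrite fineK // fin_numE phiT_fin (proj1 cvx).
under [leRHS]eq_bigr => i _ do
  rewrite (eq_bigr _ (fun j _ => phiT i j)) sumEFin.
rewrite sumEFin -sum_mean_bshift -sumEFin; apply: lee_sum => i _.
rewrite -sumEFin; apply: lee_sum => j _; rewrite mxE.
exact: (convex_ext_jensen (x := fun k => T (bshift k i) (bshift k j))
                          (y := fun k => y (bshift k i) (bshift k j))).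
Qed.

Lemma ot_obj_bavg (phi : R -> \bar R) (C T : 'M[R]_(n * m)) :
    convex_ext phi -> (forall k i j, C (bshift k i) (bshift k j) = C i j) ->
    ot_obj phi C T != +oo%E ->
  (ot_obj phi C (bavg T) <= ot_obj phi C T)%E.
Proof.
move=> cvx C_inv objT_fin; rewrite /ot_obj lin_cost_bavg // leeD2l //.
exact/convex_cost_bavg/ot_obj_entry_finite/objT_fin/(proj1 cvx).
Qed.

End Averaging.

Lemma optimal_of_pinfty (R : realType) d (phi : R -> \bar R) C a b
    (T T' : 'M[R]_d) :
    optimal phi C a b T -> ot_obj phi C T = +oo%E -> feasible a b T' ->
  optimal phi C a b T'.
Proof.
move=> [_ optT] objT_y feasT'; split=> // T'' /optT.
by rewrite objT_y leye_eq => /eqP ->; exact: leey.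
Qed.

Lemma feasible_outer (R : realType) d (a b : 'I_d -> R) :
  is_prob_vec a -> is_prob_vec b -> feasible a b (\matrix_(i, j) (a i * b j)).
Proof.
move=> [_ sum_a] [_ sum_b]; split=> i; under eq_bigr do rewrite mxE.
  by rewrite -mulr_sumr sum_b mulr1.
by rewrite -mulr_suml sum_a mul1r.
Qed.

Lemma stacked_outer_block_circulant (R : realType) n m
    (alpha beta : 'I_m -> R) a b :
    stacked alpha a -> stacked beta b ->
  block_circulant (\matrix_(i, j) (a i * b j) : 'M[R]_(n * m))
    (fun _ => \matrix_(r, c) (alpha r * beta c)).
Proof.
by move=> stk_a stk_b i j hi hj; rewrite !mxE (stk_a i hi) (stk_b j hj).
Qed.

Theorem lemma1 (R : realType) (n m : nat) (hn : (0 < n)%N) (hm : (0 < m)%N)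
  (alpha beta : 'I_m -> R) (a b : 'I_(n * m) -> R)
  (halpha : forall k, 0 <= alpha k) (hbeta : forall k, 0 <= beta k)
  (ha : @stacked R n m alpha a) (hb : @stacked R n m beta b)
  (hpa : is_prob_vec a) (hpb : is_prob_vec b)
  (Cb : nat -> 'M[R]_m) (hCb : forall k i j, 0 <= Cb k i j)
  (C : 'M[R]_(n * m)) (hC : block_circulant C Cb)
  (phi : R -> \bar R) (hphi : convex_ext phi)
  (hphineg : forall x, x < 0 -> phi x = +oo%E)
  (hex : exists T, optimal phi C a b T) :
  exists T : 'M[R]_(n * m), optimal phi C a b T /\
    exists Tb : nat -> 'M[R]_m, (forall k i j, 0 <= Tb k i j) /\
      block_circulant T Tb.
Proof.
case: hex => T optT; have [objT_y|objT_fin] := eqVneq (ot_obj phi C T) +oo%E.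
  exists (\matrix_(i, j) (a i * b j)).
  split; first exact/(optimal_of_pinfty optT objT_y)/feasible_outer.
  exists (fun _ => \matrix_(r, c) (alpha r * beta c)).
  split; last exact: stacked_outer_block_circulant.
  by move=> k i j; rewrite mxE mulr_ge0.
have T_ge0 i j : 0 <= T i j.
  rewrite leNgt; apply: contraT => /negbNE /hphineg phiT_y.
  by have := ot_obj_entry_finite (proj1 hphi) objT_fin i j; rewrite phiT_y.
have C_inv := block_circulant_bshift hn hm hC.
exists (bavg hn hm T); split.
  split; first exact/feasible_bavg/(proj1 optT)/(stacked_bshift hn hm hb)
                                    /(stacked_bshift hn hm ha).
  by move=> T' /(proj2 optT); apply: le_trans; exact: ot_obj_bavg.
eexists; split; last exact/bshift_invariant_block_circulant/bavg_bshift.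
by move=> k r c; rewrite mxE bavg_ge0.
Qed.
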